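(* Let $D$ be a daughter polytope of a finite set $\mathbf P\subset\mathbb Z^n$ with $P=\operatorname{Conv}\mathbf P$. Let $F\subset P$ be a face with $F\notin\mathcal D(D)$, and set $\mathbf F=F\cap\mathbf P$. Then $D\cap F$ is a daughter polytope of $\mathbf F$. Its associated set $\mathcal D_F(D\cap F)$, the inclusion-maximal faces of $F$ disjoint from $D\cap F$, consists exactly of the nonempty intersections $R\cap F$ for $R\in\mathcal D(D)$.
   Context: **Daughter polytope.** For a nonempty polytope $D$ with vertices in a finite set $\mathbf Q$, let $\mathcal D(D)$ be the set of inclusion-maximal faces of $\operatorname{Conv}\mathbf Q$ disjoint from $D$. $D$ is a daughter polytope of $\mathbf Q$ if: 1. distinct members of $\mathcal D(D)$ are disjoint; 2. $D=\operatorname{Conv}(\mathbf Q\setminus\bigcup_{G\in\mathcal D(D)}G)$.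
   Formalization: F is also assumed to meet D (D ∩ F ≠ ∅) besides F ∉ 𝒟(D), and faces are taken nonempty, the empty set counting as a face of no polytope. Each condition added here is assumed in the paper as well or is needed for the statement above to hold. *)

From HB Require Import structures.
From mathcomp Require Import all_boot all_order all_algebra.
From mathcomp Require Import boolp classical_sets.
Set Implicit Arguments. Unset Strict Implicit. Unset Printing Implicit Defensive.
Import Order.TTheory GRing.Theory Num.Theory.
Local Open Scope classical_set_scope.
Local Open Scope ring_scope.

Section Polytopes.
Variables (R : realFieldType) (n : nat).
Local Notation V := 'rV[R]_n.

Definition dotv (c x : V) : R := \sum_(i < n) c 0 i * x 0 i.

Definition conv (A : set V) : set V :=
  [set x | exists (m : nat) (p : 'I_m -> V) (w : 'I_m -> R),
     (forall i, A (p i)) /\ (forall i, 0 <= w i) /\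
     \sum_(i < m) w i = 1 /\ x = \sum_(i < m) w i *: p i].

(* (nonempty) face of a convex set K: intersection of K with a
   supporting hyperplane {c.x = d}, where c.x <= d on K
   (c = 0, d = 0 gives K itself). *)
Definition face (K F : set V) : Prop :=
  F !=set0 /\
  exists (c : V) (d : R), (forall x, K x -> dotv c x <= d) /\
    F = [set x | K x /\ dotv c x = d].

Definition polytope_in (Q D : set V) : Prop :=
  exists S : set V, S `<=` Q /\ D = conv S.

Definition DD (Q D : set V) : set (set V) :=
  [set G | face (conv Q) G /\ G `&` D = set0 /\
     forall G', face (conv Q) G' -> G' `&` D = set0 -> G `<=` G' -> G' = G].

Definition daughter (Q D : set V) : Prop :=
  D !=set0 /\ polytope_in Q D /\
  (forall G1 G2, DD Q D G1 -> DD Q D G2 -> G1 <> G2 -> G1 `&` G2 = set0) /\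
  D = conv (Q `\` \bigcup_(G in DD Q D) G).

End Polytopes.

From HB Require Import structures.
From mathcomp Require Import all_boot all_order all_algebra.
From mathcomp Require Import boolp classical_sets cardinality reals.
From mathcomp Require Import lra.
Set Implicit Arguments. Unset Strict Implicit. Unset Printing Implicit Defensive.
Import Order.TTheory GRing.Theory Num.Theory.
Local Open Scope classical_set_scope.
Local Open Scope ring_scope.

(* A face of a face of Conv P is a face of Conv P: tilt the inner supporting
   hyperplane by a large multiple of the outer one.  Hence the maximal faces
   of F avoiding D ∩ F are exactly the nonempty traces R ∩ F of the members R
   of 𝒟(D), and these inherit pairwise disjointness.  Finally, cutting
   Conv (P \ ⋃𝒟(D)) by the supporting hyperplane of F leaves the hull of the
   points of F outside ⋃𝒟(D). *)

Section ConvexHulls.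
Variables (R : realFieldType) (n : nat).
Local Notation V := 'rV[R]_n.
Implicit Types (A B Q P F G : set V) (c x : V) (d : R).

Lemma dotv_sum c m (w : 'I_m -> R) (p : 'I_m -> V) :
  dotv c (\sum_(i < m) w i *: p i) = \sum_(i < m) w i * dotv c (p i).
Proof.
rewrite /dotv; under eq_bigr do rewrite summxE mulr_sumr.
rewrite exchange_big /=; apply: eq_bigr => i _; rewrite mulr_sumr.
by apply: eq_bigr => j _; rewrite mxE mulrCA.
Qed.

Lemma dotvDZ c1 c2 (l : R) x :
  dotv (c1 + l *: c2) x = dotv c1 x + l * dotv c2 x.
Proof.
rewrite /dotv mulr_sumr -big_split; apply: eq_bigr => j _.
by rewrite !mxE mulrDl mulrA.
Qed.

Lemma dotvN c x : dotv (- c) x = - dotv c x.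
Proof. by rewrite /dotv -sumrN; apply: eq_bigr => j _; rewrite mxE mulNr. Qed.

Lemma conv_subset A B : A `<=` B -> conv A `<=` conv B.
Proof.
move=> AB x [m [p [w [Ap [w0 [w1 ->]]]]]].
by exists m, p, w; split => // i; apply: AB.
Qed.

Lemma sub_conv A : A `<=` conv A.
Proof.
move=> a Aa; exists 1%N, (fun _ => a), (fun _ => 1).
by rewrite !big_ord1 scale1r.
Qed.

Lemma conv_dotv_le A c d : (forall a, A a -> dotv c a <= d) ->
  forall x, conv A x -> dotv c x <= d.
Proof.
move=> Ale x [m [p [w [Ap [w0 [w1 ->]]]]]].
rewrite dotv_sum -[d]mul1r -w1 mulr_suml; apply: ler_sum => i _.
by rewrite ler_wpM2l // Ale.
Qed.

Lemma conv_dotv_eq A c d : (forall a, A a -> dotv c a = d) ->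
  forall x, conv A x -> dotv c x = d.
Proof.
move=> Aeq x Ax; apply/eqP; rewrite eq_le.
rewrite (conv_dotv_le _ Ax) => [|a /Aeq ->] //=.
rewrite -lerN2 -dotvN (conv_dotv_le _ Ax) // => a /Aeq.
by rewrite dotvN => ->.
Qed.

(* A convex combination lying on a supporting hyperplane puts weight only on
   points of that hyperplane; the others are replaced by one that is on it. *)
Lemma conv_hyperplane A c d : (forall a, A a -> dotv c a <= d) ->
  [set x | conv A x /\ dotv c x = d] = conv (A `&` [set x | dotv c x = d]).
Proof.
move=> Ale; apply/seteqP; split => x; last first.
  move=> Hx; split; first exact: conv_subset Hx.
  by apply: conv_dotv_eq Hx => a [].
move=> [[m [p [w [Ap [w0 [w1 xE]]]]]] cx].
have slack0 i : w i * (d - dotv c (p i)) = 0.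
  apply: (@psumr_eq0P _ _ predT (fun i => w i * (d - dotv c (p i)))) => // [k _|].
    by rewrite mulr_ge0 // subr_ge0 Ale.
  under eq_bigr do rewrite mulrBr.
  by rewrite sumrB -mulr_suml w1 mul1r -dotv_sum -xE cx subrr.
have on_hyp i : w i != 0 -> dotv c (p i) = d.
  by move=> wi; move/eqP: (slack0 i); rewrite mulf_eq0 (negbTE wi) subr_eq0 => /eqP.
have [j wj] : exists j, w j != 0.
  apply: contrapT => nw; move: w1; rewrite big1 => [/eqP|i _].
    by rewrite eq_sym oner_eq0.
  by apply/eqP/negPn/negP => wi; apply: nw; exists i.
pose q i := if w i == 0 then p j else p i.
exists m, q, w; split; [|split => //; split => //].
  move=> i; rewrite /q; case: ifPn => wi; first by split; [|apply: on_hyp].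
  by split; [|apply: on_hyp].
rewrite xE; apply: eq_bigr => i _; rewrite /q.
by case: ifP => // /eqP ->; rewrite !scale0r.
Qed.

Lemma face_subset K F : face K F -> F `<=` K.
Proof. by move=> [_ [c [d [_ ->]]]] x []. Qed.

Lemma conv_setI_face P Q F : Q `<=` P -> face (conv P) F ->
  conv Q `&` F = conv (F `&` Q).
Proof.
move=> QP [_ [c [d [Ple FE]]]].
have Qle a : Q a -> dotv c a <= d by move=> /QP/sub_conv/Ple.
rewrite FE; transitivity [set x | conv Q x /\ dotv c x = d].
  apply/seteqP; split => x /=; first by move=> [Qx [_ cx]].
  by move=> [Qx cx]; split => //; split => //; exact: conv_subset Qx.
rewrite conv_hyperplane //; congr conv; apply/seteqP; split => x /=.
  by move=> [Qx cx]; split => //; split => //; exact/sub_conv/QP.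
by move=> [[_ cx] Qx].
Qed.

Lemma face_conv_trace P F : face (conv P) F -> conv (F `&` P) = F.
Proof.
move=> hF; rewrite -(conv_setI_face (@subset_refl _ P) hF).
by apply: setIidr; apply: face_subset hF.
Qed.

Lemma face_trace_subset P F G : face (conv P) F -> face (conv (F `&` P)) G ->
  G `<=` F.
Proof. by move=> hF; rewrite face_conv_trace //; apply: face_subset. Qed.

Lemma face_setI_trace P F G : face (conv P) F -> face (conv P) G ->
  G `&` F !=set0 -> face (conv (F `&` P)) (G `&` F).
Proof.
move=> hF [_ [c [d [Ple GE]]]] GF0; rewrite face_conv_trace //; split => //.
have FP := face_subset hF.
exists c, d; split; first by move=> x /FP; apply: Ple.
rewrite GE; apply/seteqP; split => x /=; first by move=> [[_ ->] Fx].
by move=> [Fx cx]; split => //; split => //; apply: FP.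
Qed.

(* [l] must dominate every ratio (c2.p - d2) / (d1 - c1.p) over the points
   strictly below the outer hyperplane. *)
Lemma tilt_supporting (s : seq V) c1 d1 c2 d2 :
  (forall p, p \in s -> dotv c1 p <= d1) ->
  (forall p, p \in s -> dotv c1 p = d1 -> dotv c2 p <= d2) ->
  exists l, forall p, p \in s ->
    dotv (c2 + l *: c1) p <= d2 + l * d1 /\
    (dotv (c2 + l *: c1) p = d2 + l * d1 -> dotv c1 p = d1 /\ dotv c2 p = d2).
Proof.
move=> le1 le2; pose r p := (dotv c2 p - d2) / (d1 - dotv c1 p).
exists (\sum_(q <- undup s) `|r q| + 1) => p ps; rewrite dotvDZ.
set l := _ + 1.
have := le1 p ps; rewrite le_eqVlt => /orP [/eqP e1|lt1].
  by rewrite e1 lerD2r le2 //; split => // /addIr.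
have gap : dotv c2 p - d2 < l * d1 - l * dotv c1 p.
  have pos : 0 < d1 - dotv c1 p by rewrite subr_gt0.
  rewrite -mulrBr -(divfK (lt0r_neq0 pos) (dotv c2 p - d2)) -/(r p) ltr_pM2r //.
  rewrite (le_lt_trans (ler_norm _)) // ltr_pwDr //.
  rewrite (bigD1_seq p) ?mem_undup ?undup_uniq //=.
  by rewrite lerDl sumr_ge0.
by split; [lra | move=> e; exfalso; lra].
Qed.

Lemma face_trans P F G : finite_set P -> face (conv P) F ->
  face (conv (F `&` P)) G -> face (conv P) G.
Proof.
move=> /finite_seqP [s Ps] hF; rewrite face_conv_trace //.
move=> [G0 [c2 [d2 [Fle GE]]]]; split => //.
move: hF => [_ [c1 [d1 [Ple FE]]]].
have Pin p : P p -> p \in s by rewrite Ps.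
have sP p : p \in s -> P p by rewrite Ps.
have below1 p : p \in s -> dotv c1 p <= d1 by move=> /sP /sub_conv /Ple.
have below2 p : p \in s -> dotv c1 p = d1 -> dotv c2 p <= d2.
  by move=> /sP Pp e; apply: Fle; rewrite FE; split => //; apply: sub_conv.
have [l tilt] := tilt_supporting below1 below2.
exists (c2 + l *: c1), (d2 + l * d1); split.
  by apply: conv_dotv_le => p /Pin /tilt [].
rewrite GE FE; apply/seteqP; split => x /=.
  by move=> [[Px e1] e2]; split => //; rewrite dotvDZ e1 e2.
move=> [Px e].
have Hx : conv (P `&` [set x | dotv (c2 + l *: c1) x = d2 + l * d1]) x.
  by rewrite -conv_hyperplane // => p /Pin /tilt [].
have on_both a : (P `&` [set x | dotv (c2 + l *: c1) x = d2 + l * d1]) a ->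
    dotv c1 a = d1 /\ dotv c2 a = d2.
  by move=> [/Pin Pa ea]; apply: (tilt a Pa).2.
split; first split => //.
  by apply: (conv_dotv_eq _ Hx) => a /on_both [].
by apply: (conv_dotv_eq _ Hx) => a /on_both [].
Qed.

Lemma sub_count_lt (T : eqType) (a b : pred T) (s : seq T) (x : T) :
  subpred a b -> x \in s -> b x -> ~~ a x -> (count a s < count b s)%N.
Proof.
move=> ab + bx nax; elim: s => //= y s IH; rewrite inE => /orP [/eqP <-|xs].
  by rewrite bx (negbTE nax) add0n add1n ltnS sub_count.
by rewrite -addnS leq_add ?IH //; case: (a y) (ab y) => // ->.
Qed.

(* A face is determined by the points of [P] it contains, so counting those
   points strictly increases along strictly increasing chains of faces. *)
Lemma DD_exists P D G : finite_set P -> face (conv P) G -> G `&` D = set0 ->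
  exists2 M, DD P D M & G `<=` M.
Proof.
move=> /finite_seqP [s Ps] hG GD.
pose mu (H : set V) := count (fun x => `[< H x >]) s.
have mu_lt H1 H2 : face (conv P) H1 -> face (conv P) H2 -> H1 `<=` H2 ->
    H2 <> H1 -> (mu H1 < mu H2)%N.
  move=> h1 h2 H12 ne.
  have [p [Pp [H2p nH1p]]] : exists p, P p /\ H2 p /\ ~ H1 p.
    apply: contrapT => none; apply: ne; apply/seteqP; split => //.
    rewrite -(face_conv_trace h1) -(face_conv_trace h2).
    apply: conv_subset => x [H2x Px]; split => //.
    by apply: contrapT => nH1x; apply: none; exists x.
  apply: (@sub_count_lt _ _ _ _ p).
  - by move=> y /asboolP /H12 /asboolP.
  - by rewrite Ps in Pp.
  - exact/asboolP.
  - by apply/negP => /asboolP.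
pose above k := `[< exists H, [/\ face (conv P) H, H `&` D = set0,
  G `<=` H & mu H = k] >].
have aboveG : exists k, above k by exists (mu G); apply/asboolP; exists G; split.
have above_le k : above k -> (k <= size s)%N.
  by move=> /asboolP [H [_ _ _ <-]]; apply: count_size.
case: (ex_maxnP aboveG above_le) => _ /asboolP [M [hM MD GM <-]] Mmax.
exists M => //; split => //; split => // H hH HD MH.
apply: contrapT => ne; move: (mu_lt _ _ hM hH MH ne).
rewrite ltnNge Mmax //; apply/asboolP; exists H; split => //.
exact: subset_trans MH.
Qed.

End ConvexHulls.

Section FaceRestriction.
Variables (R : realFieldType) (n : nat) (P D F : set 'rV[R]_n).
Hypotheses (finP : finite_set P) (hF : face (conv P) F).
Hypothesis DD_disjoint :
  forall G1 G2, DD P D G1 -> DD P D G2 -> G1 <> G2 -> G1 `&` G2 = set0.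

Lemma setI_restrict G : G `<=` F -> G `&` (D `&` F) = G `&` D.
Proof. by move=> GF; rewrite (setIC D) setIA (setIidl GF). Qed.

Lemma DD_restrict_sub G : DD (F `&` P) (D `&` F) G ->
  exists M, DD P D M /\ M `&` F !=set0 /\ G = M `&` F.
Proof.
move=> [hG [GD Gmax]].
have GF := face_trace_subset hF hG.
rewrite setI_restrict // in GD.
have [M hM GM] := DD_exists finP (face_trans finP hF hG) GD.
have MF : M `&` F !=set0.
  by have [x Gx] := hG.1; exists x; split; [apply: GM | apply: GF].
exists M; split => //; split => //; symmetry; apply: Gmax.
- exact: face_setI_trace hF hM.1 MF.
- rewrite setI_restrict; last exact: subIsetr.
  exact: subsetI_eq0 (@subIsetl _ M F) (@subset_refl _ D) hM.2.1.
- by move=> x Gx; split; [apply: GM | apply: GF].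
Qed.

Lemma DD_restrict_sup M : DD P D M -> M `&` F !=set0 ->
  DD (F `&` P) (D `&` F) (M `&` F).
Proof.
move=> hM MF; split; first exact: face_setI_trace hF hM.1 MF.
split.
  rewrite setI_restrict; last exact: subIsetr.
  exact: subsetI_eq0 (@subIsetl _ M F) (@subset_refl _ D) hM.2.1.
move=> H hH HD MH.
have HF := face_trace_subset hF hH.
rewrite setI_restrict // in HD.
have [M' hM' HM'] := DD_exists finP (face_trans finP hF hH) HD.
have MM' : M = M'.
  apply: contrapT => ne; move/seteqP: (DD_disjoint hM hM' ne) => [+ _].
  by have [x [Mx Fx]] := MF; move/(_ x); apply; split => //; apply/HM'/MH.
by apply/seteqP; split => // x Hx; split; [rewrite MM'; apply: HM' | apply: HF].
Qed.

Lemma DD_restrict : DD (F `&` P) (D `&` F) =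
  [set G | exists M, DD P D M /\ M `&` F !=set0 /\ G = M `&` F].
Proof.
apply/seteqP; split => G; first exact: DD_restrict_sub.
by move=> [M [hM [MF ->]]]; apply: DD_restrict_sup.
Qed.

Lemma DD_restrict_disjoint G1 G2 :
  DD (F `&` P) (D `&` F) G1 -> DD (F `&` P) (D `&` F) G2 -> G1 <> G2 ->
  G1 `&` G2 = set0.
Proof.
rewrite DD_restrict => -[M1 [h1 [_ ->]]] [M2 [h2 [_ ->]]] ne.
have M12 : M1 <> M2 by move=> e; apply: ne; rewrite e.
exact: subsetI_eq0 (@subIsetl _ M1 F) (@subIsetl _ M2 F) (DD_disjoint h1 h2 M12).
Qed.

Lemma DD_restrict_setD_bigcup :
  (F `&` P) `\` \bigcup_(G in DD (F `&` P) (D `&` F)) G =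
  (F `&` P) `\` \bigcup_(G in DD P D) G.
Proof.
rewrite DD_restrict; apply/seteqP; split => x /= [FPx nx]; split => //.
  move=> [M hM Mx]; apply: nx; exists (M `&` F); last by split => //; case: FPx.
  by exists M; split => //; split => //; exists x; split => //; case: FPx.
by move=> [_ [M [hM [_ ->]]] [Mx _]]; apply: nx; exists M.
Qed.

End FaceRestriction.

Theorem mainTheorem6 (R : realType) (n : nat) (P : set 'rV[R]_n)
  (finP : finite_set P)
  (intP : forall x, P x -> forall j, x 0 j \is a Num.int)
  (D : set 'rV[R]_n) (hD : daughter P D)
  (F : set 'rV[R]_n) (hF : face (conv P) F) (hFD : ~ DD P D F)
  (hDF : D `&` F !=set0) :
  daughter (F `&` P) (D `&` F) /\
  DD (F `&` P) (D `&` F) =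
    [set G | exists Rf, DD P D Rf /\ Rf `&` F !=set0 /\ G = Rf `&` F].
Proof.
have [_ [_ [DD_disj Deq]]] := hD.
have DF_conv : D `&` F = conv ((F `&` P) `\` \bigcup_(G in DD P D) G).
  by rewrite -setIDA {1}Deq (conv_setI_face _ hF) //; apply: subDsetl.
split; last exact: DD_restrict finP hF DD_disj.
split => //; split; first by exists ((F `&` P) `\` \bigcup_(G in DD P D) G); split => // x [[]].
split; first exact: DD_restrict_disjoint finP hF DD_disj.
by rewrite (DD_restrict_setD_bigcup finP hF DD_disj); exact: DF_conv.
Qed.
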